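(* Let $E=[n]$, let $f:2^E\to\mathbb{Z}_{\ge 0}$ be a nonnegative integer-valued submodular function with $M:=\|f\|_\infty=\max_{S\subseteq E}|f(S)|<\infty$, let $F$ be its Lovász extension, and let $d\in\mathbb{Z}^n$ be a nonzero vector. For $R>0$ define \[ \Phi(x)=F(x)+g_R(x),\qquad g_R(x):=R\,|1-d^\top x|,\qquad x\in\mathbb{R}^n. \] If $R>M$, then every minimizer $x^\star$ of $\Phi$ over $\mathbb{R}^n$ satisfies $d^\top x^\star=1$. In particular, for such $R$ the constrained problem $\min\{F(x): x\in\mathbb{R}^n,\ d^\top x=1\}$ is equivalent to the unconstrained problem $\min_{x\in\mathbb{R}^n}\Phi(x)$.
   Context: For $x\in\mathbb{R}^n$ and $S\subseteq E$ write $x(S)=\sum_{i\in S}x_i$. The base polytope of $f$ is $B(f)=\{x\in\mathbb{R}^n: x(S)\le f(S)\ \forall S\subseteq E,\ x(E)=f(E)\}$. The Lovász extension of $f$ is $F(x)=\max_{v\in B(f)}v^\top x$; equivalently $F(x)=\sum_{i=1}^n x_{\pi_i}(f(S_i)-f(S_{i-1}))$, where $\pi$ is a permutation with $x_{\pi_1}\ge\cdots\ge x_{\pi_n}$ (ties broken lexicographically), $S_i=\{\pi_1,\dots,\pi_i\}$ and $S_0=\emptyset$. *)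

From HB Require Import structures.
From mathcomp Require Import all_boot all_order all_algebra.
From mathcomp Require Import reals.
Set Implicit Arguments. Unset Strict Implicit. Unset Printing Implicit Defensive.
Import Order.TTheory GRing.Theory Num.Theory.
Local Open Scope ring_scope.

Definition submodular (n : nat) (f : {set 'I_n} -> nat) : Prop :=
  forall A B : {set 'I_n}, (f (A :|: B) + f (A :&: B) <= f A + f B)%N.

(* Permutation sorting x in non-increasing order, ties broken
   lexicographically (sort is stable, enum 'I_n is increasing). *)
Definition lovasz_perm (R : realType) (n : nat) (x : 'I_n -> R) : seq 'I_n :=
  sort (fun i j => x j <= x i) (enum 'I_n).

Definition lovasz_prefix (R : realType) (n : nat) (x : 'I_n -> R) (k : nat)
  : {set 'I_n} := [set i in take k (lovasz_perm x)].

Definition lovasz_ext (R : realType) (n : nat) (f : {set 'I_n} -> nat)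
  (x : 'I_n -> R) : R :=
  \sum_(k < n)
    x (nth k (lovasz_perm x) k) *
    ((f (lovasz_prefix x k.+1))%:R - (f (lovasz_prefix x k))%:R).

Definition dotz (R : realType) (n : nat) (d : 'I_n -> int) (x : 'I_n -> R) : R :=
  \sum_(i < n) (d i)%:~R * x i.

Definition Phi (R : realType) (n : nat) (f : {set 'I_n} -> nat) (d : 'I_n -> int)
  (r : R) (x : 'I_n -> R) : R :=
  lovasz_ext f x + r * `|1 - dotz d x|.

Definition supnorm (n : nat) (f : {set 'I_n} -> nat) : nat :=
  (\max_(S : {set 'I_n}) f S)%N.

From HB Require Import structures.
From mathcomp Require Import all_boot all_order all_algebra.
From mathcomp Require Import reals.
From mathcomp Require Import ring lra.
Set Implicit Arguments. Unset Strict Implicit. Unset Printing Implicit Defensive.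
Import Order.TTheory GRing.Theory Num.Theory.
Local Open Scope ring_scope.

(* Moving a single coordinate of x by less than the smallest gap between
   distinct values of x yields a point whose sorting order also sorts x
   non-increasingly.  The Lovasz formula does not depend on how ties are
   broken, so along that common order F is linear with coefficients
   f(S_k) - f(S_(k-1)) in [-M, M], and F grows by at most M |delta|.
   If d^T x <> 1, choose i with d_i <> 0 and move x_i by
   delta = eta (1 - d^T x) / d_i for a small eta in (0, 1]: the penalty drops
   by R eta |1 - d^T x| >= R |delta| (as |d_i| >= 1), which beats M |delta|
   when R > M. *)

Lemma sum_mul_increments_eq0 (R : pzRingType) (w h : nat -> R) (m : nat) :
  h 0%N = 0 -> h m = 0 ->
  (forall k, (0 < k < m)%N -> w k.-1 != w k -> h k = 0) ->
  \sum_(k < m) w k * (h k.+1 - h k) = 0.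
Proof.
move=> h0 hm hk.
suff partial j : (j <= m)%N ->
    \sum_(k < j) w k * (h k.+1 - h k) = if j is j'.+1 then w j' * h j else 0.
  by rewrite partial //; case: m hm {hk partial} => [|m] hm //; rewrite hm mulr0.
elim: j => [|j IH] lt_jm; first by rewrite big_ord0.
rewrite big_ord_recr /= IH ?(ltnW lt_jm) //.
case: j IH lt_jm => [|j] IH lt_jm; first by rewrite h0 subr0 add0r.
have [->|ne] := eqVneq (w j) (w j.+1); first by rewrite mulrBr addrCA subrr addr0.
by rewrite (hk j.+1) //= mulr0 add0r subr0.
Qed.

Lemma exists_level_gap (R : realDomainType) (T : finType) (x : T -> R) :
  exists2 e, 0 < e & forall a b, x a < x b -> e <= x b - x a.
Proof.
exists (\big[Order.min/1]_(p : T * T)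
          (if x p.1 < x p.2 then x p.2 - x p.1 else 1)).
  apply: (big_ind (fun v => 0 < v)) => // [u v|p _].
    by rewrite lt_min => -> ->.
  by case: ifP => // lt_p; rewrite subr_gt0.
move=> a b lt_ab; apply: le_trans (bigmin_le _ (a, b) _) _.
by rewrite /= lt_ab.
Qed.

Lemma sum_nth_perm (V : nmodType) (n : nat) (s : seq 'I_n) (G : 'I_n -> V) :
  perm_eq s (enum 'I_n) -> \sum_(k < n) G (nth k s k) = \sum_j G j.
Proof.
move=> s_perm.
have size_s : size s = n by rewrite (perm_size s_perm) size_enum_ord.
rewrite -[RHS]big_enum /= -(perm_big _ s_perm).
case: n s G s_perm size_s => [|m] s G _ size_s.
  by rewrite big_ord0; case: s size_s => // _; rewrite big_nil.
rewrite [RHS](big_nth ord0) size_s big_mkord; apply: eq_bigr => k _.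
by rewrite (set_nth_default ord0) // size_s.
Qed.

Section LovaszSum.
Variables (R : realDomainType) (n : nat).

Definition desc_enum (x : 'I_n -> R) (s : seq 'I_n) : bool :=
  perm_eq s (enum 'I_n) && sorted (relpre x >=%R) s.

Definition shift_coord (x : 'I_n -> R) (i : 'I_n) (c : R) : 'I_n -> R :=
  fun j => x j + (if j == i then c else 0).

Lemma sum_norm_shift_coord x i c : \sum_j `|shift_coord x i c j - x j| = `|c|.
Proof.
rewrite (bigD1 i) //= big1 => [|j /negbTE ne_ji].
  by rewrite /shift_coord eqxx addrAC subrr add0r addr0.
by rewrite /shift_coord ne_ji addr0 subrr normr0.
Qed.

Lemma desc_enum_shift_coord x i c e s :
    (forall a b, x a < x b -> e <= x b - x a) -> `|c| < e ->
  desc_enum (shift_coord x i c) s -> desc_enum x s.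
Proof.
rewrite /desc_enum => gap lt_ce /andP[-> sorted_s] /=.
apply: sub_sorted sorted_s => a b /=; rewrite /shift_coord.
move=> le_ba; rewrite leNgt; apply/negP => /gap; move: le_ba.
have := ler_norm c; have := ler_norm (- c); rewrite normrN.
have := normr_ge0 c.
by case: (a == i); case: (b == i); lra.
Qed.

Lemma prefix_strict_superlevel x s k :
    desc_enum x s -> (0 < k < n)%N -> (map x s)`_k < (map x s)`_k.-1 ->
  [set j in take k s] = [set j | (map x s)`_k < x j].
Proof.
move=> /andP[s_perm sorted_s] /andP[k_gt0 lt_kn] lt_k.
have size_s : size s = n by rewrite (perm_size s_perm) size_enum_ord.
have sorted_w : sorted >=%R (map x s) by rewrite sorted_map.
have mono := sorted_leq_nth ge_trans (@lexx _ R) 0 sorted_w.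
apply/setP => j; rewrite !inE.
have j_s : j \in s by rewrite (perm_mem s_perm) mem_enum.
have xj : x j = (map x s)`_(index j s) by rewrite (nth_map j) ?index_mem ?nth_index.
have lt_jn : (index j s < n)%N by move: j_s; rewrite -index_mem size_s.
rewrite in_take // xj; case: ltnP => [lt_jk|le_kj]; apply/esym.
  apply: lt_le_trans lt_k _; apply: mono; rewrite ?inE ?size_map ?size_s //.
    by rewrite (leq_ltn_trans (leq_pred k)).
  by rewrite -ltnS prednK.
by apply/negbTE; rewrite -leNgt; apply: mono; rewrite ?inE ?size_map ?size_s.
Qed.

Variable f : {set 'I_n} -> nat.

Definition lovasz_sum (s : seq 'I_n) (x : 'I_n -> R) : R :=
  \sum_(k < n) x (nth k s k) *
    ((f [set i in take k.+1 s])%:R - (f [set i in take k s])%:R).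

Lemma lovasz_sum_lipschitz s x y : perm_eq s (enum 'I_n) ->
  `|lovasz_sum s y - lovasz_sum s x| <= (supnorm f)%:R * \sum_j `|y j - x j|.
Proof.
move=> s_perm.
rewrite /lovasz_sum -sumrB -(sum_nth_perm (fun j => `|y j - x j|) s_perm).
rewrite mulr_sumr; apply: le_trans (ler_norm_sum _ _ _) _.
apply: ler_sum => k _; rewrite -mulrBl normrM mulrC ler_wpM2r //.
have le_M S : (f S)%:R <= (supnorm f)%:R :> R by rewrite ler_nat leq_bigmax.
have := le_M [set i in take k.+1 s]; have := le_M [set i in take k s].
have : 0 <= (f [set i in take k.+1 s])%:R :> R by [].
have : 0 <= (f [set i in take k s])%:R :> R by [].
by rewrite ler_norml; lra.
Qed.

Lemma lovasz_sum_desc_enum_eq x s1 s2 :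
  desc_enum x s1 -> desc_enum x s2 -> lovasz_sum s1 x = lovasz_sum s2 x.
Proof.
move=> desc1 desc2; have /andP[perm1 sorted1] := desc1.
have /andP[perm2 sorted2] := desc2.
have size1 : size s1 = n by rewrite (perm_size perm1) size_enum_ord.
have size2 : size s2 = n by rewrite (perm_size perm2) size_enum_ord.
have w_eq : map x s1 = map x s2.
  apply: (sorted_eq ge_trans ge_anti); rewrite ?sorted_map //.
  by apply: perm_map; rewrite (perm_trans perm1) // perm_sym.
set w := map x s1.
pose h k := (f [set i in take k s1])%:R - (f [set i in take k s2])%:R : R.
apply/eqP; rewrite -subr_eq0 /lovasz_sum -sumrB; apply/eqP.
transitivity (\sum_(k < n) w`_k * (h k.+1 - h k)).
  apply: eq_bigr => k _.
  rewrite -[x (nth k s1 k)](nth_map k 0) ?size1 //.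
  rewrite -[x (nth k s2 k)](nth_map k 0) ?size2 //.
  by rewrite -/w -w_eq /h; ring.
apply: sum_mul_increments_eq0 => [|| k k_bd ne_k].
- by rewrite /h !take0 subrr.
- rewrite /h !take_oversize ?size1 ?size2 //.
  suff -> : [set i in s1] = [set i in s2] by rewrite subrr.
  by apply/setP => i; rewrite !inE (perm_mem perm1) (perm_mem perm2).
have lt_k : w`_k < w`_k.-1.
  rewrite lt_neqAle eq_sym ne_k /=; case/andP: k_bd => k_gt0 lt_kn.
  apply: (sorted_leq_nth ge_trans (@lexx _ R) 0);
    rewrite ?sorted_map ?inE ?size_map ?size1 //.
    by rewrite (leq_ltn_trans (leq_pred k)).
  exact: leq_pred.
(* At a strict drop of the common values both prefixes are the same
   strict superlevel set of x. *)
rewrite /h (prefix_strict_superlevel desc1 k_bd lt_k).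
by rewrite /w w_eq in lt_k *; rewrite (prefix_strict_superlevel desc2 k_bd lt_k) subrr.
Qed.

End LovaszSum.

Section LovaszExtension.
Variables (R : realType) (n : nat).

Lemma desc_enum_lovasz_perm (x : 'I_n -> R) : desc_enum x (lovasz_perm x).
Proof.
rewrite /desc_enum /lovasz_perm perm_sort perm_refl /=.
by apply: sort_sorted => a b; exact: le_total.
Qed.

Lemma lovasz_ext_shift_coord_le f (x : 'I_n -> R) i c e :
    (forall a b, x a < x b -> e <= x b - x a) -> `|c| < e ->
  lovasz_ext f (shift_coord x i c) <= lovasz_ext f x + (supnorm f)%:R * `|c|.
Proof.
move=> gap lt_ce; set y := shift_coord x i c.
have desc_y := desc_enum_lovasz_perm y.
have /andP[perm_y _] := desc_y.
have -> : lovasz_ext f x = lovasz_sum f (lovasz_perm y) x.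
  apply: (lovasz_sum_desc_enum_eq f (desc_enum_lovasz_perm x)).
  exact: desc_enum_shift_coord gap lt_ce desc_y.
have := lovasz_sum_lipschitz f x y perm_y; rewrite sum_norm_shift_coord.
have -> : lovasz_ext f y = lovasz_sum f (lovasz_perm y) y by [].
by move=> /(le_trans (ler_norm _)); lra.
Qed.

Lemma dotz_shift_coord d (x : 'I_n -> R) i c :
  dotz d (shift_coord x i c) = dotz d x + (d i)%:~R * c.
Proof.
rewrite /dotz /shift_coord; under eq_bigr do rewrite mulrDr.
rewrite big_split /=; congr (_ + _).
rewrite (bigD1 i) //= eqxx big1 ?addr0 // => j /negbTE ->; exact: mulr0.
Qed.

Lemma Phi_descent f d (r : R) (x : 'I_n -> R) i :
    d i != 0 -> (supnorm f)%:R < r -> dotz d x != 1 ->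
  exists y, Phi f d r y < Phi f d r x.
Proof.
move=> di_neq0 lt_Mr dx_neq1.
have [e e_gt0 gap] := exists_level_gap x.
set M : R := (supnorm f)%:R; set u := 1 - dotz d x; set a := `|u|.
have a_gt0 : 0 < a by rewrite normr_gt0 subr_eq0 eq_sym.
(* eta <= 1 keeps the penalty linear along the move, and eta a < e keeps the
   move below the level gap. *)
set eta := e / (e + a).
have eta_gt0 : 0 < eta by rewrite divr_gt0 ?addr_gt0.
have eta_le1 : eta <= 1 by rewrite ler_pdivrMr ?addr_gt0 // mul1r lerDl ltW.
have eta_a : eta * a < e.
  have : eta * e + eta * a = e by rewrite -mulrDr mulfVK // gt_eqF ?addr_gt0.
  have : 0 < eta * e by rewrite mulr_gt0.
  lra.
set di : R := (d i)%:~R; set c := eta * u / di.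
have di_ge1 : 1 <= `|di| by rewrite -intr_norm ler1z -gtz0_ge1 normr_gt0.
have di_c : di * c = eta * u by rewrite mulrC mulfVK // intr_eq0.
have c_le : `|c| <= eta * a.
  have : `|c| * `|di| = eta * a by rewrite -normrM mulrC di_c normrM gtr0_norm.
  have := normr_ge0 c; nra.
exists (shift_coord x i c).
have F_le := lovasz_ext_shift_coord_le f i gap (le_lt_trans c_le eta_a).
rewrite /Phi dotz_shift_coord -/di di_c.
have -> : 1 - (dotz d x + eta * u) = (1 - eta) * u by rewrite /u; ring.
rewrite normrM ger0_norm ?subr_ge0 // -/a.
have : M * `|c| <= M * (eta * a) by rewrite ler_wpM2l.
have : M * (eta * a) < r * (eta * a) by rewrite ltr_pM2r // mulr_gt0.
by move: F_le; rewrite -/M; lra.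
Qed.

End LovaszExtension.

Theorem lemma2 (R : realType) (n : nat) (f : {set 'I_n} -> nat)
  (d : 'I_n -> int) (r : R) :
  submodular f ->
  (exists i, d i != 0) ->
  (supnorm f)%:R < r ->
  forall xs : 'I_n -> R,
    (forall y : 'I_n -> R, Phi f d r xs <= Phi f d r y) ->
    dotz d xs = 1 /\
    (forall y : 'I_n -> R, dotz d y = 1 -> lovasz_ext f xs <= lovasz_ext f y).
Proof.
move=> _ [i di_neq0] lt_Mr xs xs_min.
have dxs1 : dotz d xs = 1.
  apply/eqP; apply: contraT => dxs_neq1.
  have [y lt_y] := Phi_descent di_neq0 lt_Mr dxs_neq1.
  by have := xs_min y; rewrite leNgt lt_y.
split=> // y dy1; have := xs_min y.
by rewrite /Phi dxs1 dy1 subrr normr0 mulr0 !addr0.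
Qed.
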